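(* In the discrete scheme described in the context, let $M'=\max_j|\theta^n_j|+\max_j|q^n_j|$. Fix $j_0\in\{1,\dots,n\}$ and integers $0\le k<l\le T/\delta t$, and let $$J_{k,l}=\{j\in\{1,\dots,n\}:\alpha_{k\delta t}(j)<\alpha_{k\delta t}(j_0),\ \alpha_{l\delta t}(j)>\alpha_{l\delta t}(j_0)\}.$$ There exists a constant $C_4'>0$ depending only on $M'$, $T$ and $Q^{sat}$ such that if $n\delta t<\frac1{C_4'}$, then $\#J_{k,l}\le2(l-k)$.
   Context: $Q^{sat}:\mathbb{R}^3\to\mathbb{R}$ is smooth with $\partial_\theta Q^{sat}>0$, $\partial_zQ^{sat}<0$. $\Theta(w,z,t)$ is the solution $\theta$ of $\theta+Q^{sat}(\theta,z,t)=w$ (assumed well defined), with $\partial_w\Theta>0$, $\partial_z\Theta>0$. Discrete scheme. Fix $T>0$, $n\ge1$, $\delta t>0$, $z_i=i/n$. There are $n$ parcels $j=1,\dots,n$; initially parcel $j$ is at position $j$ with value $\theta^n_j$, where $\theta^n_1\le\dots\le\theta^n_n$ and $q^n_j\le Q^{sat}(\theta^n_j,z_j,0)$; parcel $j$ carries the fixed number $\theta^M_j=\theta^n_j+q^n_j$. One time step from $k\delta t$ to $(k+1)\delta t$, with $\tau=(k+1)\delta t$: positions $m=n,\dots,1$ are processed in this order. At stage $m$, with current configuration (parcel $p(i)$ at position $i$ with value $\vartheta_i$), position $i$ is wet if $\vartheta_i<\Theta(\theta^M_{p(i)},z_i,\tau)$; a wet position $i_0\le m$ is eligible if for every $i$ with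 $i_0<i\le m$, either $i$ is not wet and $\vartheta_i<\Theta(\theta^M_{p(i_0)},z_i,\tau)$, or $i$ is wet and $\theta^M_{p(i_0)}>\theta^M_{p(i)}$. If some position is eligible, let $i_*$ be the eligible position whose parcel has the largest $\theta^M$ (largest position in case of ties); that parcel moves to position $m$ with new value $\Theta(\theta^M_{p(i_* )},z_m,\tau)$, the parcels at $i_*+1,\dots,m$ move down one position keeping their values, others unchanged; otherwise nothing changes. After stage $1$ one has the configuration at time $(k+1)\delta t$. $\alpha_{k\delta t}(j)$ denotes the position of parcel $j$ after $k$ time steps ($\alpha_0=id$). *)

From Stdlib Require Import Reals Lra Lia List Arith Bool.
From Coquelicot Require Import Coquelicot.
Open Scope R_scope.

Definition cont3 (f : R -> R -> R -> R) : Prop :=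
  forall x y z : R,
    continuous (fun p : R * R * R => f (fst (fst p)) (snd (fst p)) (snd p)) (x, y, z).

Fixpoint Ck (k : nat) (f : R -> R -> R -> R) : Prop :=
  match k with
  | O => cont3 f
  | S k' =>
      cont3 f /\
      exists d1 d2 d3 : R -> R -> R -> R,
        (forall x y z, is_derive (fun s => f s y z) x (d1 x y z)) /\
        (forall x y z, is_derive (fun s => f x s z) y (d2 x y z)) /\
        (forall x y z, is_derive (fun s => f x y s) z (d3 x y z)) /\
        Ck k' d1 /\ Ck k' d2 /\ Ck k' d3
  end.

Definition smooth3 (f : R -> R -> R -> R) : Prop := forall k, Ck k f.

Definition Rltb (x y : R) : bool := if Rlt_dec x y then true else false.
Definition Rleb (x y : R) : bool := if Rle_dec x y then true else false.

(* A configuration: [cp i] is the parcel at position i, [cv i] its value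
   (positions i = 1..n are meaningful). *)
Record config := mkConfig { cp : nat -> nat ; cv : nat -> R }.

Section Scheme.
Variable Theta : R -> R -> R -> R.
Variable n : nat.
Variable thetaM : nat -> R.          (* θ^M_j = θ^n_j + q^n_j, fixed per parcel *)
Variable tau : R.                    (* τ = (k+1) δt *)

Definition zpos (i : nat) : R := INR i / INR n.

Definition wetb (c : config) (i : nat) : bool :=
  Rltb (cv c i) (Theta (thetaM (cp c i)) (zpos i) tau).

Definition elig_condb (c : config) (i0 i : nat) : bool :=
  orb (andb (negb (wetb c i)) (Rltb (cv c i) (Theta (thetaM (cp c i0)) (zpos i) tau)))
      (andb (wetb c i) (Rltb (thetaM (cp c i)) (thetaM (cp c i0)))).

Definition eligibleb (c : config) (m i0 : nat) : bool :=
  andb (wetb c i0) (forallb (elig_condb c i0) (seq (S i0) (m - i0))).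

(* scan positions in increasing order; keep the eligible one with the largest θ^M,
   a later (larger) position winning ties *)
Definition select_best (c : config) (m : nat) : option nat :=
  fold_left
    (fun (best : option nat) (i : nat) =>
       if eligibleb c m i then
         match best with
         | None => Some i
         | Some b => if Rleb (thetaM (cp c b)) (thetaM (cp c i)) then Some i else Some b
         end
       else best)
    (seq 1 m) None.

(* the parcel at i* moves to m (value reset to Θ(θ^M, z_m, τ)); those at i*+1..m move down one *)
Definition move (c : config) (istar m : nat) : config :=
  mkConfig
    (fun i => if orb (i <? istar) (m <? i) then cp c i
              else if i =? m then cp c istar else cp c (S i))
    (fun i => if orb (i <? istar) (m <? i) then cv c i
              else if i =? m then Theta (thetaM (cp c istar)) (zpos m) tau
              else cv c (S i)).

Definition stage (c : config) (m : nat) : config :=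
  match select_best c m with
  | Some istar => move c istar m
  | None => c
  end.

Definition time_step (c : config) : config :=
  fold_left stage (rev (seq 1 n)) c.

End Scheme.

Definition init_config (theta0 : nat -> R) : config := mkConfig (fun i => i) theta0.

Fixpoint config_at (Theta : R -> R -> R -> R) (n : nat) (dt : R)
         (theta0 q0 : nat -> R) (k : nat) : config :=
  match k with
  | O => init_config theta0
  | S k' => time_step Theta n (fun j => theta0 j + q0 j) (INR (S k') * dt)
                      (config_at Theta n dt theta0 q0 k')
  end.

Definition alpha (Theta : R -> R -> R -> R) (n : nat) (dt : R)
           (theta0 q0 : nat -> R) (k j : nat) : nat :=
  match find (fun i => cp (config_at Theta n dt theta0 q0 k) i =? j) (seq 1 n) with
  | Some i => i
  | None => 0%nat
  end.

Definition card_J (Theta : R -> R -> R -> R) (n : nat) (dt : R)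
           (theta0 q0 : nat -> R) (j0 k l : nat) : nat :=
  length (filter (fun j =>
            andb (alpha Theta n dt theta0 q0 k j <? alpha Theta n dt theta0 q0 k j0)
                 (alpha Theta n dt theta0 q0 l j0 <? alpha Theta n dt theta0 q0 l j))
          (seq 1 n)).

Definition maxabs (n : nat) (f : nat -> R) : R :=
  fold_right Rmax 0 (map (fun j => Rabs (f j)) (seq 1 n)).

(* Compactness and the sign of the partial derivatives of [Qsat] give, once
   [n dt] is small, the margin [Θ(w, z_i, t + dt) < Θ(w, z_{i+1}, t)]: one level
   down lowers [Θ] by at least [c / n], one time step raises it by at most [C dt].
   By induction on the time steps every configuration at a time level is sorted
   and dry.  During a time step a parcel shifted down by a move therefore stays
   dry, so movers come from the untouched bottom block, and since the heaviest
   eligible parcel is chosen, no later mover is heavier than an earlier one that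
   overtook [j0].  A parcel overtaking [j0] leaves a position that is dry for its
   [θ^M]; after a second overtaking that position is dry one level higher, and a
   third, no heavier, mover cannot pass it.  So at most two parcels overtake [j0]
   per time step, and summing over the steps bounds [#J_{k,l}] by [2 (l - k)]. *)

From Stdlib Require Import Reals Lra Lia List Bool RList Classical ClassicalEpsilon.
From Coquelicot Require Import Coquelicot.
Open Scope R_scope.

Lemma cont3_near (g : R -> R -> R -> R) (e : posreal) : cont3 g ->
  forall x y z, exists d : posreal, forall x' y' z',
    Rabs (x' - x) < d -> Rabs (y' - y) < d -> Rabs (z' - z) < d ->
    Rabs (g x' y' z' - g x y z) < e.
Proof.
  intros Hg x y z.
  destruct (proj1 (filterlim_locally _ _) (Hg x y z) e) as [d Hd].
  exists d; intros x' y' z' hx hy hz.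
  exact (Hd (x', y', z') (conj (conj hx hy) hz)).
Qed.

Lemma cont3_box_cover (g : R -> R -> R -> R) (e : R -> R -> R -> posreal)
    (a1 b1 a2 b2 a3 b3 : R) : cont3 g ->
  exists l : list (R * R * R), forall x y z,
    a1 <= x <= b1 -> a2 <= y <= b2 -> a3 <= z <= b3 ->
    exists u v w, In (u, v, w) l /\ Rabs (g x y z - g u v w) < e u v w.
Proof.
  intros Hg.
  set (near (t : Compactness.Tn 3 R) := constructive_indefinite_description _
                   (cont3_near g (e (fst t) (fst (snd t)) (fst (snd (snd t)))) Hg
                      (fst t) (fst (snd t)) (fst (snd (snd t))))).
  apply NNPP; intro Hnot.
  apply (compactness_list 3 (a1, (a2, (a3, tt))) (b1, (b2, (b3, tt)))
           (fun t => proj1_sig (near t))).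
  intros [l Hl]; apply Hnot.
  exists (map (fun t : Compactness.Tn 3 R => (fst t, fst (snd t), fst (snd (snd t)))) l).
  intros x y z hx hy hz.
  destruct (Hl (x, (y, (z, tt)))) as [[u [v [w []]]] [Hin [_ [cu [cv [cw _]]]]]];
    [simpl; tauto|].
  exists u, v, w; split.
  - exact (in_map (fun t : Compactness.Tn 3 R => (fst t, fst (snd t), fst (snd (snd t)))) _ _ Hin).
  - exact (proj2_sig (near (u, (v, (w, tt)))) x y z cu cv cw).
Qed.

Lemma cont3_bounded (g : R -> R -> R -> R) (a1 b1 a2 b2 a3 b3 : R) : cont3 g ->
  exists M, forall x y z, a1 <= x <= b1 -> a2 <= y <= b2 -> a3 <= z <= b3 ->
    Rabs (g x y z) <= M.
Proof.
  intros Hg.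
  destruct (cont3_box_cover g (fun _ _ _ => mkposreal 1 Rlt_0_1) a1 b1 a2 b2 a3 b3 Hg)
    as [l Hl].
  exists (MaxRlist (map (fun t => let '(u, v, w) := t in Rabs (g u v w) + 1) l)).
  intros x y z hx hy hz.
  destruct (Hl x y z hx hy hz) as [u [v [w [Hin Hnear]]]].
  eapply Rle_trans; [|apply MaxRlist_P1, (in_map _ _ _ Hin)].
  pose proof (Rabs_triang_inv (g x y z) (g u v w)); simpl in *; lra.
Qed.

Lemma cont3_pos_lower_bound (g : R -> R -> R -> R) (a1 b1 a2 b2 a3 b3 : R) :
  cont3 g -> (forall x y z, 0 < g x y z) ->
  exists k, 0 < k /\ forall x y z,
    a1 <= x <= b1 -> a2 <= y <= b2 -> a3 <= z <= b3 -> k <= g x y z.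
Proof.
  intros Hg Hpos.
  set (half x y z := mkposreal (g x y z / 2) ltac:(pose proof (Hpos x y z); lra)).
  destruct (cont3_box_cover g half a1 b1 a2 b2 a3 b3 Hg) as [l Hl].
  set (vals := map (fun t => let '(u, v, w) := t in g u v w / 2) l).
  exists (MinRlist vals); split.
  - apply MinRlist_P2; intros y Hy.
    apply in_map_iff in Hy as [[[u v] w] [<- _]]; pose proof (Hpos u v w); lra.
  - intros x y z hx hy hz.
    destruct (Hl x y z hx hy hz) as [u [v [w [Hin Hnear]]]].
    eapply Rle_trans; [apply MinRlist_P1, (in_map _ _ _ Hin)|].
    apply Rabs_def2 in Hnear; simpl in *; lra.
Qed.

Lemma zpos_S (n i : nat) : (1 <= n)%nat -> zpos n (S i) = zpos n i + / INR n.
Proof. intros Hn; unfold zpos; rewrite S_INR; field; apply not_0_INR; lia. Qed.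

Lemma zpos_le (n i i' : nat) : (1 <= n)%nat -> (i <= i')%nat -> zpos n i <= zpos n i'.
Proof.
  intros Hn Hi; unfold zpos, Rdiv; apply Rmult_le_compat_r.
  - apply Rlt_le, Rinv_0_lt_compat, lt_0_INR; lia.
  - apply le_INR, Hi.
Qed.

Lemma zpos_bounds (n i : nat) : (1 <= n)%nat -> (i <= 2 * n)%nat -> 0 <= zpos n i <= 2.
Proof.
  intros Hn Hi.
  assert (Hz0 : zpos n 0 = 0) by (unfold zpos; simpl; lra).
  assert (Hz2 : zpos n (2 * n) = 2)
    by (unfold zpos; rewrite mult_INR; simpl; field; apply not_0_INR; lia).
  rewrite <- Hz0, <- Hz2; split; apply zpos_le; lia.
Qed.

Section Saturation.
Variables Qsat Theta : R -> R -> R -> R.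
Hypothesis Qsat_smooth : smooth3 Qsat.
Hypothesis Qsat_theta_pos : forall th z t, Derive (fun s => Qsat s z t) th > 0.
Hypothesis Qsat_z_neg : forall th z t, Derive (fun s => Qsat th s t) z < 0.
Hypothesis Theta_solves : forall w z t, Theta w z t + Qsat (Theta w z t) z t = w.

Lemma Qsat_C1 : exists d1 d2 d3 : R -> R -> R -> R,
  (forall x y z, is_derive (fun s => Qsat s y z) x (d1 x y z)) /\
  (forall x y z, is_derive (fun s => Qsat x s z) y (d2 x y z)) /\
  (forall x y z, is_derive (fun s => Qsat x y s) z (d3 x y z)) /\
  cont3 Qsat /\ cont3 d2 /\ cont3 d3 /\
  (forall x y z, 0 < d1 x y z) /\ (forall x y z, d2 x y z < 0).
Proof.
  destruct (Qsat_smooth 1%nat) as [cQ [d1 [d2 [d3 [h1 [h2 [h3 [_ [c2 c3]]]]]]]]].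
  exists d1, d2, d3; do 6 (split; [assumption|]); split.
  - intros x y z; rewrite <- (is_derive_unique _ _ _ (h1 x y z)); apply Qsat_theta_pos.
  - intros x y z; rewrite <- (is_derive_unique _ _ _ (h2 x y z)); apply Qsat_z_neg.
Qed.

Lemma Qsat_lt_theta (a b z t : R) : a < b -> Qsat a z t < Qsat b z t.
Proof.
  intros Hab; destruct Qsat_C1 as [d1 [_ [_ [h1 [_ [_ [_ [_ [_ [p1 _]]]]]]]]]].
  destruct (MVT_cor2 (fun s => Qsat s z t) (fun s => d1 s z t) a b Hab) as [c [Hc _]].
  { intros c _; apply is_derive_Reals, h1. }
  pose proof (p1 c z t); nra.
Qed.

Lemma Qsat_lt_z (th z1 z2 t : R) : z1 < z2 -> Qsat th z2 t < Qsat th z1 t.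
Proof.
  intros Hz; destruct Qsat_C1 as [_ [d2 [_ [_ [h2 [_ [_ [_ [_ [_ p2]]]]]]]]]].
  destruct (MVT_cor2 (fun s => Qsat th s t) (fun s => d2 th s t) z1 z2 Hz) as [c [Hc _]].
  { intros c _; apply is_derive_Reals, h2. }
  pose proof (p2 th c t); nra.
Qed.

Lemma Theta_lt_of (w th z t : R) : w < th + Qsat th z t -> Theta w z t < th.
Proof.
  intros H; destruct (Rlt_or_le (Theta w z t) th) as [Hlt|[Hlt|Heq]]; auto.
  - pose proof (Qsat_lt_theta _ _ z t Hlt); pose proof (Theta_solves w z t); lra.
  - pose proof (Theta_solves w z t); rewrite Heq in *; lra.
Qed.

Lemma Theta_le_of (w th z t : R) : w <= th + Qsat th z t -> Theta w z t <= th.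
Proof.
  intros H; destruct (Rle_or_lt (Theta w z t) th) as [Hle|Hlt]; auto.
  pose proof (Qsat_lt_theta _ _ z t Hlt); pose proof (Theta_solves w z t); lra.
Qed.

Lemma Theta_le_w (w1 w2 z t : R) : w1 <= w2 -> Theta w1 z t <= Theta w2 z t.
Proof. intros H; apply Theta_le_of; rewrite Theta_solves; exact H. Qed.

Lemma Theta_le_z (w z1 z2 t : R) : z1 <= z2 -> Theta w z1 t <= Theta w z2 t.
Proof.
  intros [Hlt|<-]; [|lra].
  apply Theta_le_of; pose proof (Theta_solves w z2 t).
  pose proof (Qsat_lt_z (Theta w z2 t) _ _ t Hlt); lra.
Qed.

Lemma Theta_bounded (Mp T : R) : exists B, forall w z t,
  Rabs w <= Mp -> 0 <= z <= 2 -> 0 <= t <= T -> Rabs (Theta w z t) <= B.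
Proof.
  destruct Qsat_C1 as [_ [_ [_ [_ [_ [_ [cQ _]]]]]]].
  destruct (cont3_bounded Qsat 0 0 0 2 0 T cQ) as [M0 HM0].
  exists (Mp + M0); intros w z t Hw Hz Ht.
  apply Rabs_le_between in Hw.
  pose proof (proj1 (Rabs_le_between _ _) (HM0 0 z t ltac:(lra) Hz Ht)) as HQ0.
  pose proof (Theta_solves w z t) as Hsol.
  apply Rabs_le_between; split; apply Rnot_lt_le; intros Hout.
  - pose proof (Qsat_lt_theta (Theta w z t) 0 z t ltac:(lra)); lra.
  - pose proof (Qsat_lt_theta 0 (Theta w z t) z t ltac:(lra)); lra.
Qed.

Lemma Theta_step_margin (Mp T : R) : T > 0 -> exists C4, C4 > 0 /\
  forall (n : nat) (dt : R), (1 <= n)%nat -> dt > 0 -> INR n * dt < 1 / C4 ->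
  forall w i t, Rabs w <= Mp -> (1 <= i <= n)%nat -> 0 <= t -> t + dt <= T ->
  Theta w (zpos n i) (t + dt) < Theta w (zpos n (S i)) t.
Proof.
  intros HT.
  destruct Qsat_C1 as [_ [d2 [d3 [_ [h2 [h3 [_ [c2 [c3 [_ p2]]]]]]]]]].
  destruct (Theta_bounded Mp T) as [B HB].
  destruct (cont3_pos_lower_bound (fun x y z => - d2 x y z) (-B) B 0 2 0 T)
    as [ka [Hka Hk]].
  { intros x y z.
    apply (continuous_opp (fun p : R * R * R => d2 (fst (fst p)) (snd (fst p)) (snd p))), c2. }
  { intros x y z; pose proof (p2 x y z); lra. }
  destruct (cont3_bounded d3 (-B) B 0 2 0 T c3) as [L HL].
  set (L' := Rmax L 0).
  assert (HL' : 0 <= L' /\ L <= L') by (split; [apply Rmax_r|apply Rmax_l]).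
  exists ((L' + 1) / ka); split; [apply Rdiv_lt_0_compat; lra|].
  intros n dt Hn Hdt Hndt w i t Hw Hi Ht Htdt.
  assert (HnR : 0 < INR n) by (apply lt_0_INR; lia).
  set (z := zpos n i); set (z' := zpos n (S i)).
  assert (Hz : 0 <= z <= 2) by (apply zpos_bounds; lia).
  assert (Hz' : 0 <= z' <= 2) by (apply zpos_bounds; lia).
  assert (Hzz : z' = z + / INR n) by (apply zpos_S; lia).
  set (b := Theta w z' t).
  assert (Hb : -B <= b <= B) by (apply Rabs_le_between, HB; auto; lra).
  apply Theta_lt_of; rewrite <- (Theta_solves w z' t); fold b.
  assert (Hdrop : ka / INR n <= Qsat b z t - Qsat b z' t).
  { assert (Hlt : z < z') by (pose proof (Rinv_0_lt_compat _ HnR); lra).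
    destruct (MVT_cor2 (fun s => Qsat b s t) (fun s => d2 b s t) z z' Hlt) as [xi [Exi Hxi]].
    { intros c _; apply is_derive_Reals, h2. }
    pose proof (Hk b xi t Hb ltac:(lra) ltac:(lra)).
    replace (z' - z) with (/ INR n) in Exi by lra; unfold Rdiv.
    pose proof (Rinv_0_lt_compat _ HnR); nra. }
  assert (Hdrift : - L' * dt <= Qsat b z (t + dt) - Qsat b z t).
  { destruct (MVT_cor2 (fun s => Qsat b z s) (fun s => d3 b z s) t (t + dt) ltac:(lra))
      as [eta [Eeta Heta]].
    { intros c _; apply is_derive_Reals, h3. }
    pose proof (proj1 (Rabs_le_between _ _) (HL b z eta Hb Hz ltac:(lra))).
    replace (t + dt - t) with dt in Eeta by ring.
    nra. }
  assert (Hsmall : L' * dt < ka / INR n).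
  { apply (Rmult_lt_reg_r (INR n)); [exact HnR|].
    replace (ka / INR n * INR n) with ka by (field; lra).
    replace (1 / ((L' + 1) / ka)) with (ka / (L' + 1)) in Hndt by (field; lra).
    apply (Rmult_lt_compat_r (L' + 1)) in Hndt; [|lra].
    replace (ka / (L' + 1) * (L' + 1)) with ka in Hndt by (field; lra).
    nra. }
  lra.
Qed.

End Saturation.

Lemma filter_length_mono {A} (f g : A -> bool) (l : list A) :
  (forall x, In x l -> f x = true -> g x = true) ->
  (length (filter f l) <= length (filter g l))%nat.
Proof.
  induction l as [|a l IH]; simpl; intros H; [lia|].
  specialize (IH (fun x Hx => H x (or_intror Hx))).
  destruct (f a) eqn:Ef; destruct (g a) eqn:Eg; simpl; try lia.
  rewrite (H a (or_introl eq_refl) Ef) in Eg; discriminate.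
Qed.

Lemma filter_length_nil {A} (f : A -> bool) (l : list A) :
  (forall x, In x l -> f x = false) -> length (filter f l) = 0%nat.
Proof.
  intros H.
  enough (length (filter f l) <= length (filter (fun _ => false) l))%nat
    by (rewrite filter_false in *; simpl in *; lia).
  apply filter_length_mono; intros x Hx E; rewrite H in E; auto.
Qed.

Lemma filter_length_orb {A} (f g : A -> bool) (l : list A) :
  (length (filter (fun x => f x || g x) l) <= length (filter f l) + length (filter g l))%nat.
Proof. induction l as [|a l IH]; simpl; [lia|]; destruct (f a), (g a); simpl; lia. Qed.

Lemma filter_length_le_1 {A} (f : A -> bool) (l : list A) (y : A) : NoDup l ->
  (forall x, In x l -> f x = true -> x = y) -> (length (filter f l) <= 1)%nat.
Proof.
  induction l as [|a l IH]; simpl; intros Hnd H; [lia|].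
  inversion Hnd as [|? ? Ha Hl]; subst.
  destruct (f a) eqn:E; simpl; [|apply IH; auto].
  assert (a = y) as -> by (apply H; auto).
  rewrite filter_length_nil; [lia|].
  intros x Hx; destruct (f x) eqn:Ex; auto.
  exfalso; apply Ha; rewrite <- (H x (or_intror Hx) Ex); exact Hx.
Qed.

Lemma Rltb_iff (x y : R) : Rltb x y = true <-> x < y.
Proof. unfold Rltb; destruct (Rlt_dec x y); split; intros; auto; discriminate || contradiction. Qed.

Lemma Rleb_spec (x y : R) : if Rleb x y then x <= y else y < x.
Proof. unfold Rleb; destruct (Rle_dec x y); lra. Qed.

Ltac case_nat_tests :=
  repeat (match goal with
          | |- context [Nat.ltb ?a ?b] => destruct (Nat.ltb_spec a b)
          | |- context [Nat.eqb ?a ?b] => destruct (Nat.eqb_spec a b)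
          end; simpl).

Section Step.
Variable Theta : R -> R -> R -> R.
Variable n : nat.
Variable thM : nat -> R.
Variables tau tau0 : R.
Hypothesis n_pos : (1 <= n)%nat.
Hypothesis Theta_le_w : forall w1 w2 z t, w1 <= w2 -> Theta w1 z t <= Theta w2 z t.
Hypothesis Theta_le_z : forall w z1 z2 t, z1 <= z2 -> Theta w z1 t <= Theta w z2 t.
Hypothesis step_margin : forall j i, (1 <= j <= n)%nat -> (1 <= i <= n)%nat ->
  Theta (thM j) (zpos n i) tau < Theta (thM j) (zpos n (S i)) tau0.

Definition thM_at (c : config) (i : nat) : R := thM (cp c i).
Definition wet (c : config) (i : nat) : Prop := cv c i < Theta (thM_at c i) (zpos n i) tau.
Definition elig_cond (c : config) (i0 i : nat) : Prop :=
  (~ wet c i /\ cv c i < Theta (thM_at c i0) (zpos n i) tau) \/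
  (wet c i /\ thM_at c i < thM_at c i0).
Definition eligible (c : config) (m i0 : nat) : Prop :=
  wet c i0 /\ forall i, (i0 < i <= m)%nat -> elig_cond c i0 i.

Lemma wetb_iff (c : config) (i : nat) : wetb Theta n thM tau c i = true <-> wet c i.
Proof. apply Rltb_iff. Qed.

Lemma elig_condb_iff (c : config) (i0 i : nat) :
  elig_condb Theta n thM tau c i0 i = true <-> elig_cond c i0 i.
Proof.
  unfold elig_condb, elig_cond.
  rewrite orb_true_iff, !andb_true_iff, negb_true_iff, !Rltb_iff, <- wetb_iff.
  destruct (wetb Theta n thM tau c i); intuition discriminate.
Qed.

Lemma eligibleb_iff (c : config) (m i0 : nat) :
  eligibleb Theta n thM tau c m i0 = true <-> eligible c m i0.
Proof.
  unfold eligibleb, eligible; rewrite andb_true_iff, wetb_iff, forallb_forall.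
  split; intros [Hw H]; split; auto; intros i Hi.
  - apply elig_condb_iff, H, in_seq; lia.
  - apply in_seq in Hi; apply elig_condb_iff, H; lia.
Qed.

Definition best_so_far (c : config) (m : nat) (acc : option nat) (seen : list nat) : Prop :=
  match acc with
  | None => forall i, In i seen -> ~ eligible c m i
  | Some b => In b seen /\ eligible c m b /\
              forall i, In i seen -> eligible c m i -> thM_at c i <= thM_at c b
  end.

Lemma best_so_far_fold (c : config) (m : nat) (l : list nat) : forall acc seen,
  best_so_far c m acc seen ->
  best_so_far c m (fold_left
    (fun (best : option nat) (i : nat) =>
       if eligibleb Theta n thM tau c m i then
         match best with
         | None => Some i
         | Some b => if Rleb (thM (cp c b)) (thM (cp c i)) then Some i else Some b
         end
       else best) l acc) (seen ++ l).
Proof.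
  induction l as [|x l IH]; intros acc seen H; simpl; [rewrite app_nil_r; exact H|].
  replace (seen ++ x :: l) with ((seen ++ x :: nil) ++ l) by (rewrite <- app_assoc; reflexivity).
  apply IH.
  destruct (eligibleb Theta n thM tau c m x) eqn:Ex.
  - apply eligibleb_iff in Ex.
    destruct acc as [b|]; simpl in H |- *.
    + destruct H as [Hb [Eb Hmax]].
      pose proof (Rleb_spec (thM (cp c b)) (thM (cp c x))) as Hcmp.
      destruct (Rleb (thM (cp c b)) (thM (cp c x))); simpl;
        (split; [apply in_or_app; simpl; tauto|split; [assumption|]]);
        intros i Hi Ei; apply in_app_or in Hi as [Hi|[<-|[]]];
        unfold thM_at in *; try lra.
      * specialize (Hmax i Hi Ei); unfold thM_at in Hmax; lra.
      * exact (Hmax i Hi Ei).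
    + split; [apply in_or_app; simpl; tauto|split; [assumption|]].
      intros i Hi Ei; apply in_app_or in Hi as [Hi|[<-|[]]]; [|lra].
      exfalso; exact (H i Hi Ei).
  - assert (Hx : ~ eligible c m x) by (rewrite <- eligibleb_iff, Ex; discriminate).
    destruct acc as [b|]; simpl in H |- *.
    + destruct H as [Hb [Eb Hmax]].
      split; [apply in_or_app; tauto|split; [assumption|]].
      intros i Hi Ei; apply in_app_or in Hi as [Hi|[<-|[]]]; [exact (Hmax i Hi Ei)|tauto].
    + intros i Hi; apply in_app_or in Hi as [Hi|[<-|[]]]; auto.
Qed.

Lemma select_best_spec (c : config) (m : nat) :
  match select_best Theta n thM tau c m with
  | None => forall i, (1 <= i <= m)%nat -> ~ eligible c m i
  | Some b => (1 <= b <= m)%nat /\ eligible c m b /\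
      forall i, (1 <= i <= m)%nat -> eligible c m i -> thM_at c i <= thM_at c b
  end.
Proof.
  pose proof (best_so_far_fold c m (seq 1 m) None nil ltac:(simpl; tauto)) as H.
  unfold select_best; destruct (fold_left _ _ _) as [b|]; simpl in H.
  - destruct H as [Hb [Eb Hmax]]; apply in_seq in Hb.
    split; [lia|split; [exact Eb|]].
    intros i Hi; apply Hmax, in_seq; lia.
  - intros i Hi; apply H, in_seq; lia.
Qed.

Notation mv c istar m := (move Theta n thM tau c istar m).

Lemma move_lt (c : config) (istar m i : nat) : (i < istar)%nat ->
  cp (mv c istar m) i = cp c i /\ cv (mv c istar m) i = cv c i.
Proof. intros H; unfold move; simpl; case_nat_tests; auto; lia. Qed.

Lemma move_gt (c : config) (istar m i : nat) : (m < i)%nat ->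
  cp (mv c istar m) i = cp c i /\ cv (mv c istar m) i = cv c i.
Proof. intros H; unfold move; simpl; case_nat_tests; auto; lia. Qed.

Lemma move_top (c : config) (istar m : nat) : (istar <= m)%nat ->
  cp (mv c istar m) m = cp c istar /\
  cv (mv c istar m) m = Theta (thM_at c istar) (zpos n m) tau.
Proof. intros H; unfold move; simpl; case_nat_tests; auto; lia. Qed.

Lemma move_shift (c : config) (istar m i : nat) : (istar <= i < m)%nat ->
  cp (mv c istar m) i = cp c (S i) /\ cv (mv c istar m) i = cv c (S i).
Proof. intros H; unfold move; simpl; case_nat_tests; auto; lia. Qed.

Definition is_perm (c : config) : Prop :=
  (forall i, (1 <= i <= n)%nat -> (1 <= cp c i <= n)%nat) /\
  (forall i i', (1 <= i <= n)%nat -> (1 <= i' <= n)%nat -> cp c i = cp c i' -> i = i') /\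
  (forall j, (1 <= j <= n)%nat -> exists i, (1 <= i <= n)%nat /\ cp c i = j).

Definition move_src (istar m i : nat) : nat :=
  if i <? istar then i else if m <? i then i else if i =? m then istar else S i.
Definition move_dst (istar m p : nat) : nat :=
  if p <? istar then p else if m <? p then p else if p =? istar then m else (p - 1)%nat.

Lemma cp_move (c : config) (istar m i : nat) :
  cp (mv c istar m) i = cp c (move_src istar m i).
Proof. unfold move, move_src; simpl; destruct (i <? istar), (m <? i), (i =? m); auto. Qed.

Lemma move_src_dst (istar m p : nat) : (1 <= istar <= m)%nat ->
  move_src istar m (move_dst istar m p) = p.
Proof.
  intros H; unfold move_dst.
  destruct (Nat.ltb_spec p istar); [|destruct (Nat.ltb_spec m p);
    [|destruct (Nat.eqb_spec p istar)]]; unfold move_src; case_nat_tests; lia.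
Qed.

Lemma move_perm (c : config) (istar m : nat) : is_perm c -> (1 <= istar <= m)%nat -> (m <= n)%nat ->
  is_perm (mv c istar m).
Proof.
  intros [Hrange [Hinj Hsurj]] Hi Hm; split; [|split].
  - intros i Hi'; rewrite cp_move; apply Hrange; unfold move_src; case_nat_tests; lia.
  - intros i i' Hi1 Hi2; rewrite !cp_move; intros E.
    apply Hinj in E; [|unfold move_src; case_nat_tests; lia..].
    revert E; unfold move_src; case_nat_tests; lia.
  - intros j Hj; destruct (Hsurj j Hj) as [p [Hp Ep]].
    exists (move_dst istar m p); split.
    + unfold move_dst; case_nat_tests; lia.
    + rewrite cp_move, move_src_dst; auto.
Qed.

Definition position (c : config) (j : nat) : nat :=
  match find (fun i => cp c i =? j) (seq 1 n) with Some i => i | None => 0%nat end.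

Lemma position_eq (c : config) (j p : nat) : is_perm c -> (1 <= p <= n)%nat -> cp c p = j ->
  position c j = p.
Proof.
  intros [_ [Hinj _]] Hp E; unfold position.
  destruct (find (fun i => cp c i =? j) (seq 1 n)) as [x|] eqn:F.
  - apply find_some in F as [Hx Ex]; apply in_seq in Hx; apply Nat.eqb_eq in Ex.
    apply Hinj; lia.
  - assert (Hin : In p (seq 1 n)) by (apply in_seq; lia).
    apply (find_none _ _ F p), Nat.eqb_neq in Hin; contradiction.
Qed.

Lemma position_spec (c : config) (j : nat) : is_perm c -> (1 <= j <= n)%nat ->
  (1 <= position c j <= n)%nat /\ cp c (position c j) = j.
Proof.
  intros HP Hj; destruct (proj2 (proj2 HP) j Hj) as [p [Hp Ep]].
  rewrite (position_eq c j p); auto.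
Qed.

Lemma position_move (c : config) (istar m j : nat) : is_perm c -> (1 <= istar <= m)%nat ->
  (m <= n)%nat -> (1 <= j <= n)%nat ->
  position (mv c istar m) j = move_dst istar m (position c j).
Proof.
  intros HP Hi Hm Hj; destruct (position_spec c j HP Hj) as [Hr Hc].
  apply position_eq; [apply move_perm; auto|unfold move_dst; case_nat_tests; lia|].
  rewrite cp_move, move_src_dst; auto.
Qed.

Lemma move_overtakes (c : config) (istar m j j0 : nat) : is_perm c -> (1 <= istar <= m)%nat ->
  (m <= n)%nat -> (1 <= j <= n)%nat -> (1 <= j0 <= n)%nat ->
  (position c j < position c j0)%nat ->
  ~ (position (mv c istar m) j < position (mv c istar m) j0)%nat ->
  j = cp c istar /\ (istar < position c j0 <= m)%nat.
Proof.
  intros HP Hi Hm Hj Hj0 Hlt Hnlt; rewrite !position_move in Hnlt by auto.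
  destruct (position_spec c j HP Hj) as [Hr Hc].
  assert (position c j = istar /\ (istar < position c j0 <= m)%nat) as [E Hp]
    by (revert Hnlt; unfold move_dst; case_nat_tests; lia).
  split; [rewrite <- E; auto|exact Hp].
Qed.

Definition values_sorted (c : config) : Prop :=
  forall i, (1 <= i < n)%nat -> cv c i <= cv c (S i).
Definition dry_at (c : config) (t : R) : Prop :=
  forall i, (1 <= i <= n)%nat -> Theta (thM_at c i) (zpos n i) t <= cv c i.
Definition dry_above (c : config) (m : nat) : Prop :=
  forall i, (m < i <= n)%nat -> Theta (thM_at c i) (zpos n i) tau <= cv c i.
Definition eligible_fits_next (c : config) (m : nat) : Prop :=
  (m < n)%nat -> forall i0, (1 <= i0 <= m)%nat -> eligible c m i0 ->
  Theta (thM_at c i0) (zpos n m) tau <= cv c (S m).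
(* Positions below [a] are untouched in the current time step; those in [a..m]
   were shifted down by one and stay dry one level higher at the previous time. *)
Definition dry_region (c : config) (m a : nat) : Prop :=
  (1 <= a <= S m)%nat /\
  (forall i, (1 <= i < a)%nat -> Theta (thM_at c i) (zpos n i) tau0 <= cv c i) /\
  (forall i, (a <= i <= m)%nat -> Theta (thM_at c i) (zpos n (S i)) tau0 <= cv c i).
Definition heavy_blocked (c : config) (a : nat) (b : R) : Prop :=
  forall i0, (1 <= i0 < a)%nat -> b < thM_at c i0 -> wet c i0 ->
  exists i, (i0 < i < a)%nat /\ ~ elig_cond c i0 i.

Lemma thM_at_range (c : config) (i : nat) : is_perm c -> (1 <= i <= n)%nat ->
  exists j, (1 <= j <= n)%nat /\ thM_at c i = thM j.
Proof. intros [Hrange _] Hi; exists (cp c i); split; auto. Qed.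

Lemma dry_region_not_wet (c : config) (m a i : nat) : is_perm c -> dry_region c m a ->
  (a <= i <= m)%nat -> (m <= n)%nat -> ~ wet c i.
Proof.
  intros HP [Ha [_ Hshift]] Hi Hm Hw; unfold wet in Hw.
  destruct (thM_at_range c i HP ltac:(lia)) as [j [Hj Ej]].
  pose proof (Hshift i Hi); rewrite Ej in *.
  pose proof (step_margin j i Hj ltac:(lia)); lra.
Qed.

Lemma eligible_lt_region (c : config) (m a i : nat) : is_perm c -> dry_region c m a ->
  eligible c m i -> (1 <= i <= m)%nat -> (m <= n)%nat -> (i < a)%nat.
Proof.
  intros HP HR [Hw _] Hi Hm; apply Nat.nle_gt; intros Ha.
  exact (dry_region_not_wet c m a i HP HR ltac:(lia) Hm Hw).
Qed.

Lemma eligible_value_lt (c : config) (m istar i : nat) : eligible c m istar ->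
  (istar < i <= m)%nat -> cv c i < Theta (thM_at c istar) (zpos n i) tau.
Proof.
  intros [_ H] Hi; destruct (H i Hi) as [[_ Hlt]|[Hw Hth]]; auto.
  eapply Rlt_le_trans; [exact Hw|]; apply Theta_le_w; lra.
Qed.

Lemma eligible_transfer (c : config) (m istar i0 : nat) : (i0 < istar)%nat ->
  eligible c m istar -> wet c i0 -> thM_at c istar < thM_at c i0 ->
  (forall i, (i0 < i < istar)%nat -> elig_cond c i0 i) -> eligible c m i0.
Proof.
  intros Hlt [Hw Hc] Hw0 Hth Hbelow; split; auto; intros i Hi.
  destruct (Nat.lt_ge_cases i istar) as [h|h]; [apply Hbelow; lia|].
  destruct (Nat.eq_dec i istar) as [->|e]; [right; auto|].
  destruct (Hc i ltac:(lia)) as [[Hd Hv]|[Hw' Hth']].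
  - left; split; auto; eapply Rlt_le_trans; [exact Hv|]; apply Theta_le_w; lra.
  - right; split; auto; lra.
Qed.

Lemma wet_agree (c c' : config) (i : nat) : cp c' i = cp c i -> cv c' i = cv c i ->
  wet c' i <-> wet c i.
Proof. intros E1 E2; unfold wet, thM_at; rewrite E1, E2; tauto. Qed.

Lemma elig_cond_agree (c c' : config) (i0 i : nat) : cp c' i0 = cp c i0 ->
  cp c' i = cp c i -> cv c' i = cv c i -> elig_cond c' i0 i <-> elig_cond c i0 i.
Proof. intros E0 E1 E2; unfold elig_cond, wet, thM_at; rewrite E0, E1, E2; tauto. Qed.

Lemma move_eligible_below (c : config) (m istar i0 : nat) : (i0 < istar)%nat ->
  eligible c m istar -> wet (mv c istar m) i0 ->
  thM_at c istar < thM_at (mv c istar m) i0 ->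
  (forall i, (i0 < i < istar)%nat -> elig_cond (mv c istar m) i0 i) -> eligible c m i0.
Proof.
  intros Hlt He Hw Hth Hbelow.
  destruct (move_lt c istar m i0 Hlt) as [E1 E2].
  apply (eligible_transfer c m istar i0 Hlt He).
  - exact (proj1 (wet_agree c (mv c istar m) i0 E1 E2) Hw).
  - unfold thM_at in *; rewrite E1 in Hth; exact Hth.
  - intros i Hi; destruct (move_lt c istar m i ltac:(lia)) as [F1 F2].
    exact (proj1 (elig_cond_agree c (mv c istar m) i0 i E1 F1 F2) (Hbelow i Hi)).
Qed.

Lemma move_heavy_blocked (c : config) (m istar : nat) : (1 <= istar <= m)%nat ->
  eligible c m istar ->
  (forall i, (1 <= i <= m)%nat -> eligible c m i -> thM_at c i <= thM_at c istar) ->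
  heavy_blocked (mv c istar m) istar (thM_at c istar).
Proof.
  intros Hi He Hbest i0 Hi0 Hth Hw; apply NNPP; intros Hnone.
  assert (He0 : eligible c m i0).
  { apply (move_eligible_below c m istar i0 ltac:(lia) He Hw Hth).
    intros i Hi'; apply NNPP; intros Hc; apply Hnone; exists i; split; auto. }
  pose proof (Hbest i0 ltac:(lia) He0).
  destruct (move_lt c istar m i0 ltac:(lia)) as [E1 _].
  unfold thM_at in *; rewrite E1 in Hth; lra.
Qed.

Section Crossings.
Variable c0 : config.
Variable j0 : nat.
Hypothesis j0_range : (1 <= j0 <= n)%nat.

Definition below (c : config) (j : nat) : bool := position c j <? position c j0.
Definition crossed (c : config) : nat :=
  length (filter (fun j => below c0 j && negb (below c j)) (seq 1 n)).

(* Once [k >= 1] parcels have overtaken [j0] in the current time step, every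
   later mover has [θ^M <= b], and some position [py] between the shifted block
   and [j0] remains dry [k - 1] levels above itself for the parcel value [b1 >= b].
   For [k = 2] this blocks a third overtaking. *)
Definition crossing_state (c : config) (m a k : nat) : Prop :=
  (crossed c <= k)%nat /\ (k <= 2)%nat /\
  ((1 <= k)%nat -> (position c j0 <= m)%nat -> exists b b1 py,
     (a <= py <= position c j0)%nat /\ heavy_blocked c a b /\ b <= b1 /\
     (exists j, (1 <= j <= n)%nat /\ b1 = thM j) /\
     Theta b1 (zpos n (py + (k - 1))) tau0 <= cv c py).

Definition stage_invariant (c : config) (m : nat) : Prop :=
  is_perm c /\ values_sorted c /\ dry_above c m /\ eligible_fits_next c m /\
  exists a k, dry_region c m a /\ crossing_state c m a k.

Lemma crossed_le_of_stay (c c' : config) :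
  (forall j, (1 <= j <= n)%nat -> below c j = true -> below c' j = false -> False) ->
  (crossed c' <= crossed c)%nat.
Proof.
  intros H; apply filter_length_mono; intros j Hj E.
  apply in_seq in Hj; apply andb_true_iff in E as [E1 E2].
  rewrite E1; simpl; destruct (below c j) eqn:Eb; auto.
  exfalso; apply (H j ltac:(lia) Eb), negb_true_iff, E2.
Qed.

Lemma crossed_le_S_of_one_leaves (c c' : config) (y : nat) :
  (forall j, (1 <= j <= n)%nat -> below c j = true -> below c' j = false -> j = y) ->
  (crossed c' <= crossed c + 1)%nat.
Proof.
  intros H; unfold crossed; eapply Nat.le_trans;
    [|eapply Nat.le_trans; [apply (filter_length_orb (fun j => below c0 j && negb (below c j))
                                   (fun j => below c j && negb (below c' j)))|]].
  - apply filter_length_mono; intros j _ E; apply andb_true_iff in E as [E1 E2].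
    rewrite E1, E2; simpl; destruct (below c j); auto.
  - apply Nat.add_le_mono_l, (filter_length_le_1 _ _ y (seq_NoDup n 1)).
    intros j Hj E; apply in_seq in Hj; apply andb_true_iff in E as [E1 E2].
    apply H; [lia|exact E1|apply negb_true_iff, E2].
Qed.

Lemma stage_invariant_skip (c : config) (m : nat) : (1 <= m <= n)%nat ->
  (forall i, (1 <= i <= m)%nat -> ~ eligible c m i) ->
  stage_invariant c m -> stage_invariant c (m - 1).
Proof.
  intros Hm Hnone [HP [HS [HW [HB [a [k [[Ha [Hlow Hshift]] [Hcr [Hk Hst]]]]]]]]].
  assert (Hdry : ~ wet c m).
  { intros Hw; apply (Hnone m ltac:(lia)); split; [exact Hw|intros; lia]. }
  split; [exact HP|split; [exact HS|split; [|split]]].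
  - intros i Hi; destruct (Nat.eq_dec i m) as [->|e]; [unfold wet in Hdry; lra|apply HW; lia].
  - intros _ i0 Hi0 [Hw0 Hc0]; replace (S (m - 1)) with m by lia.
    apply Rnot_lt_le; intros Hlt; apply (Hnone i0 ltac:(lia)); split; [exact Hw0|].
    intros i Hi; destruct (Nat.eq_dec i m) as [->|e]; [|apply Hc0; lia].
    left; split; [exact Hdry|].
    eapply Rlt_le_trans; [exact Hlt|]; apply Theta_le_z, zpos_le; lia.
  - exists (Nat.min a m), k; split; [|split; [exact Hcr|split; [exact Hk|]]].
    + destruct (Nat.le_gt_cases a m) as [h|h].
      * rewrite Nat.min_l by lia; split; [lia|split; [exact Hlow|]].
        intros i Hi; apply Hshift; lia.
      * rewrite Nat.min_r by lia; split; [lia|split; [intros i Hi; apply Hlow; lia|intros; lia]].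
    + intros Hk1 Hp; destruct (Hst Hk1 ltac:(lia)) as [b [b1 [py [Hpy Hrest]]]].
      rewrite Nat.min_l by lia; exists b, b1, py; split; [lia|exact Hrest].
Qed.

Section Moving.
Variables (c : config) (m istar a k : nat).
Hypothesis m_range : (1 <= m <= n)%nat.
Hypothesis c_perm : is_perm c.
Hypothesis c_sorted : values_sorted c.
Hypothesis c_dry_above : dry_above c m.
Hypothesis c_fits_next : eligible_fits_next c m.
Hypothesis c_region : dry_region c m a.
Hypothesis c_state : crossing_state c m a k.
Hypothesis istar_range : (1 <= istar <= m)%nat.
Hypothesis istar_eligible : eligible c m istar.
Hypothesis istar_best : forall i, (1 <= i <= m)%nat -> eligible c m i ->
  thM_at c i <= thM_at c istar.

Local Notation c' := (move Theta n thM tau c istar m).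

Lemma istar_lt_region : (istar < a)%nat.
Proof. apply (eligible_lt_region c m a istar); auto; lia. Qed.

Lemma moved_top_thM : thM_at c' m = thM_at c istar.
Proof. unfold thM_at at 1; rewrite (proj1 (move_top c istar m ltac:(lia))); reflexivity. Qed.

Lemma moved_top_value : cv c' m = Theta (thM_at c istar) (zpos n m) tau.
Proof. exact (proj2 (move_top c istar m ltac:(lia))). Qed.

Lemma value_at_top_lt : cv c m < Theta (thM_at c istar) (zpos n m) tau.
Proof.
  destruct (Nat.eq_dec istar m) as [<-|e]; [exact (proj1 istar_eligible)|].
  apply (eligible_value_lt c m istar m istar_eligible); lia.
Qed.

Lemma moved_region : dry_region c' (m - 1) istar.
Proof.
  destruct c_region as [Ha [Hlow Hshift]]; pose proof istar_lt_region.
  split; [lia|split].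
  - intros i Hi; destruct (move_lt c istar m i ltac:(lia)) as [E1 E2].
    unfold thM_at; rewrite E1, E2; apply Hlow; lia.
  - intros i Hi; destruct (move_shift c istar m i ltac:(lia)) as [E1 E2].
    unfold thM_at; rewrite E1, E2.
    destruct (Nat.lt_ge_cases (S i) a) as [h|h]; [apply Hlow; lia|].
    eapply Rle_trans; [|apply Hshift; lia]; apply Theta_le_z, zpos_le; lia.
Qed.

Lemma moved_values_ge : forall i, (istar <= i <= m)%nat -> cv c i <= cv c' i.
Proof.
  intros i Hi; destruct (Nat.eq_dec i m) as [->|e].
  - rewrite moved_top_value; pose proof value_at_top_lt; lra.
  - rewrite (proj2 (move_shift c istar m i ltac:(lia))); apply c_sorted; lia.
Qed.

Lemma moved_sorted : values_sorted c'.
Proof.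
  intros i Hi.
  destruct (Nat.lt_ge_cases (S i) istar) as [h|h].
  { rewrite (proj2 (move_lt c istar m i ltac:(lia))), (proj2 (move_lt c istar m (S i) h)).
    apply c_sorted; lia. }
  destruct (Nat.eq_dec (S i) istar) as [h'|h'].
  { rewrite (proj2 (move_lt c istar m i ltac:(lia))).
    pose proof (c_sorted i ltac:(lia)); pose proof (moved_values_ge (S i) ltac:(lia)); lra. }
  destruct (Nat.lt_ge_cases (S i) m) as [h3|h3].
  { rewrite (proj2 (move_shift c istar m i ltac:(lia))),
            (proj2 (move_shift c istar m (S i) ltac:(lia))).
    apply c_sorted; lia. }
  destruct (Nat.eq_dec (S i) m) as [h4|h4].
  { rewrite (proj2 (move_shift c istar m i ltac:(lia))), h4, moved_top_value.
    pose proof value_at_top_lt; lra. }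
  destruct (Nat.eq_dec i m) as [->|h5].
  { rewrite moved_top_value, (proj2 (move_gt c istar m (S m) ltac:(lia))).
    apply c_fits_next; auto; lia. }
  rewrite (proj2 (move_gt c istar m i ltac:(lia))), (proj2 (move_gt c istar m (S i) ltac:(lia))).
  apply c_sorted; lia.
Qed.

Lemma moved_dry_above : dry_above c' (m - 1).
Proof.
  intros i Hi; destruct (Nat.eq_dec i m) as [->|e].
  - rewrite moved_top_thM, moved_top_value; lra.
  - destruct (move_gt c istar m i ltac:(lia)) as [E1 E2].
    unfold thM_at; rewrite E1, E2; apply c_dry_above; lia.
Qed.

(* A parcel left below [istar] and eligible after the move would already have been
   eligible before it, with a larger [θ^M] than the chosen one. *)
Lemma moved_fits_next : eligible_fits_next c' (m - 1).
Proof.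
  intros _ i0 Hi0 [Hw0 Hc0]; replace (S (m - 1)) with m by lia; rewrite moved_top_value.
  assert (Hle : thM_at c' i0 <= thM_at c istar).
  { apply Rnot_lt_le; intros Hgt.
    destruct (Nat.lt_ge_cases i0 istar) as [h|h].
    - assert (He0 : eligible c m i0).
      { apply (move_eligible_below c m istar i0 h istar_eligible Hw0 Hgt).
        intros i Hi; apply Hc0; lia. }
      pose proof (istar_best i0 ltac:(lia) He0).
      destruct (move_lt c istar m i0 h) as [E1 _]; unfold thM_at in *; rewrite E1 in Hgt; lra.
    - exact (dry_region_not_wet c' (m - 1) istar i0 (move_perm c istar m c_perm istar_range
               ltac:(lia)) moved_region ltac:(lia) ltac:(lia) Hw0). }
  eapply Rle_trans; [apply Theta_le_w, Hle|]; apply Theta_le_z, zpos_le; lia.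
Qed.

Lemma mover_light (b : R) : heavy_blocked c a b -> thM_at c istar <= b.
Proof.
  intros Hblock; pose proof istar_lt_region; pose proof (proj1 c_region).
  apply Rnot_lt_le; intros Hgt.
  destruct (Hblock istar ltac:(lia) Hgt (proj1 istar_eligible)) as [i [Hi Hnot]].
  apply Hnot, (proj2 istar_eligible); lia.
Qed.

Lemma moved_position_j0 : (istar < position c j0 <= m)%nat ->
  position c' j0 = (position c j0 - 1)%nat.
Proof.
  intros Hcross; rewrite position_move by (auto; lia).
  unfold move_dst; case_nat_tests; lia.
Qed.

Lemma moved_crossed_le_S : (crossed c' <= crossed c + 1)%nat.
Proof.
  apply (crossed_le_S_of_one_leaves c c' (cp c istar)); intros j Hj E1 E2.
  unfold below in E1, E2; apply Nat.ltb_lt in E1; apply Nat.ltb_ge in E2.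
  apply (move_overtakes c istar m j j0 c_perm istar_range ltac:(lia) Hj j0_range E1); lia.
Qed.

(* The third mover [istar] must satisfy the eligibility condition at [py], which the
   dry position [py] refuses to a parcel no heavier than [b1]. *)
Lemma no_third_overtake : (istar < position c j0 <= m)%nat -> (k < 2)%nat.
Proof.
  intros Hcross; destruct c_state as [_ [Hk Hst]].
  apply Nat.nle_gt; intros Hk2.
  destruct (Hst ltac:(lia) ltac:(lia)) as [b [b1 [py [Hpy [Hblock [Hbb1 [[j [Hj ->]] Hdry]]]]]]].
  replace (py + (k - 1))%nat with (S py) in Hdry by lia.
  pose proof (mover_light b Hblock) as Hlight; pose proof istar_lt_region.
  destruct (proj2 istar_eligible py ltac:(lia)) as [[_ Hlt]|[Hw _]].
  - pose proof (step_margin j py Hj ltac:(lia)).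
    assert (Theta (thM_at c istar) (zpos n py) tau <= Theta (thM j) (zpos n py) tau)
      by (apply Theta_le_w; lra).
    lra.
  - exact (dry_region_not_wet c m a py c_perm c_region ltac:(lia) ltac:(lia) Hw).
Qed.

Lemma moved_state_overtake : (istar < position c j0 <= m)%nat ->
  exists k', crossing_state c' (m - 1) istar k'.
Proof.
  intros Hcross; pose proof (no_third_overtake Hcross) as Hk2.
  pose proof istar_lt_region; pose proof moved_crossed_le_S.
  destruct c_region as [Ha [Hlow _]]; destruct c_state as [Hcr [_ Hst]].
  assert (Hb1 : exists j, (1 <= j <= n)%nat /\ thM_at c istar = thM j)
    by (apply thM_at_range; auto; lia).
  exists (S k); split; [lia|split; [lia|intros _ _]].
  rewrite (moved_position_j0 Hcross).
  pose proof (move_heavy_blocked c m istar istar_range istar_eligible istar_best) as Hblock.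
  destruct k as [|k0]; [|replace k0 with 0%nat in * by lia].
  - exists (thM_at c istar), (thM_at c istar), istar.
    split; [lia|split; [exact Hblock|split; [lra|split; [exact Hb1|]]]].
    rewrite Nat.add_0_r, (proj2 (move_shift c istar m istar ltac:(lia))).
    eapply Rle_trans; [apply Hlow; lia|apply c_sorted; lia].
  - destruct (Hst ltac:(lia) ltac:(lia)) as [b [b1 [py [Hpy [Hblk [Hbb1 [Hj Hdry]]]]]]].
    pose proof (mover_light b Hblk).
    exists (thM_at c istar), b1, (py - 1)%nat.
    split; [lia|split; [exact Hblock|split; [lra|split; [exact Hj|]]]].
    replace (py - 1 + (2 - 1))%nat with py by lia.
    rewrite (proj2 (move_shift c istar m (py - 1) ltac:(lia))).
    replace (S (py - 1)) with py by lia; rewrite Nat.add_0_r in Hdry; exact Hdry.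
Qed.

Lemma moved_state_stay : ~ (istar < position c j0 <= m)%nat ->
  crossing_state c' (m - 1) istar k.
Proof.
  intros Hstay; destruct c_state as [Hcr [Hk Hst]].
  destruct (position_spec c j0 c_perm j0_range) as [Hp0 _].
  split; [|split; [exact Hk|intros Hk1 Hp]].
  - eapply Nat.le_trans; [|exact Hcr]; apply crossed_le_of_stay; intros j Hj E1 E2.
    unfold below in E1, E2; apply Nat.ltb_lt in E1; apply Nat.ltb_ge in E2.
    apply Hstay, (move_overtakes c istar m j j0 c_perm istar_range ltac:(lia) Hj j0_range E1).
    lia.
  - exfalso; rewrite position_move in Hp by (auto; lia).
    destruct (Nat.le_gt_cases (position c j0) m) as [h|h].
    + destruct (Hst Hk1 h) as [b [b1 [py [Hpy _]]]].
      pose proof istar_lt_region; apply Hstay; lia.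
    + revert Hp; unfold move_dst; case_nat_tests; lia.
Qed.

Lemma stage_invariant_move : stage_invariant c' (m - 1).
Proof.
  split; [apply move_perm; auto; lia|].
  split; [exact moved_sorted|split; [exact moved_dry_above|split; [exact moved_fits_next|]]].
  exists istar.
  destruct (classic (istar < position c j0 <= m)%nat) as [Hcross|Hstay].
  - destruct (moved_state_overtake Hcross) as [k' Hst]; exists k'; split; auto; exact moved_region.
  - exists k; split; [exact moved_region|exact (moved_state_stay Hstay)].
Qed.

End Moving.

Lemma stage_invariant_stage (c : config) (m : nat) : (1 <= m <= n)%nat ->
  stage_invariant c m -> stage_invariant (stage Theta n thM tau c m) (m - 1).
Proof.
  intros Hm HI; pose proof (select_best_spec c m) as Hsel; unfold stage.
  destruct (select_best Theta n thM tau c m) as [istar|].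
  - destruct HI as [HP [HS [HW [HB [a [k [HR Hst]]]]]]].
    destruct Hsel as [Hi [He Hbest]].
    exact (stage_invariant_move c m istar a k Hm HP HS HW HB HR Hst Hi He Hbest).
  - exact (stage_invariant_skip c m Hm Hsel HI).
Qed.

Lemma stage_invariant_stages (m : nat) : forall c, (m <= n)%nat -> stage_invariant c m ->
  stage_invariant (fold_left (stage Theta n thM tau) (rev (seq 1 m)) c) 0.
Proof.
  induction m as [|m IH]; intros c Hm HI; [exact HI|].
  rewrite seq_S, rev_app_distr; simpl.
  apply IH; [lia|]; replace m with (S m - 1)%nat at 2 by lia.
  apply stage_invariant_stage; auto; lia.
Qed.

Lemma time_step_invariant : is_perm c0 -> values_sorted c0 -> dry_at c0 tau0 ->
  let c1 := time_step Theta n thM tau c0 in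
  is_perm c1 /\ values_sorted c1 /\ dry_at c1 tau /\ (crossed c1 <= 2)%nat.
Proof.
  intros HP HS Hdry c1.
  assert (HI : stage_invariant c0 n).
  { split; [exact HP|split; [exact HS|split; [intros i Hi; lia|split; [intros Hlt; lia|]]]].
    exists (S n), 0%nat; split.
    - split; [lia|split; [intros i Hi; apply Hdry; lia|intros i Hi; lia]].
    - split; [|split; [lia|intros; lia]].
      unfold crossed; rewrite filter_length_nil; auto.
      intros j _; destruct (below c0 j); reflexivity. }
  destruct (stage_invariant_stages n c0 (le_n n) HI)
    as [HP1 [HS1 [Hdry1 [_ [a [k [_ [Hcr [Hk _]]]]]]]]].
  unfold c1, time_step.
  split; [exact HP1|split; [exact HS1|split; [intros i Hi; apply Hdry1; lia|lia]]].
Qed.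

End Crossings.
End Step.

Lemma filter_length_leave_telescope {A} (P : nat -> A -> bool) (l : list A) (k b : nat) :
  forall d, (forall s, (k <= s < k + d)%nat ->
               (length (filter (fun x => P s x && negb (P (S s) x)) l) <= b)%nat) ->
  (length (filter (fun x => P k x && negb (P (k + d)%nat x)) l) <= b * d)%nat.
Proof.
  induction d as [|d IH]; intros Hstep.
  - rewrite Nat.add_0_r, filter_length_nil; [lia|].
    intros x _; destruct (P k x); reflexivity.
  - eapply Nat.le_trans; [|eapply Nat.le_trans;
      [apply (filter_length_orb (fun x => P k x && negb (P (k + d)%nat x))
                                (fun x => P (k + d)%nat x && negb (P (S (k + d)) x)))|]].
    + apply filter_length_mono; intros x _ E; apply andb_true_iff in E as [E1 E2].
      rewrite Nat.add_succ_r in E2; rewrite E1, E2; simpl.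
      destruct (P (k + d)%nat x); reflexivity.
    + pose proof (IH (fun s Hs => Hstep s ltac:(lia))).
      pose proof (Hstep (k + d)%nat ltac:(lia)); lia.
Qed.

Lemma maxabs_ge (n : nat) (f : nat -> R) (j : nat) : (1 <= j <= n)%nat ->
  Rabs (f j) <= maxabs n f.
Proof.
  intros Hj; unfold maxabs.
  assert (Hin : In j (seq 1 n)) by (apply in_seq; lia).
  induction (seq 1 n) as [|x s IH]; simpl in *; [contradiction|].
  destruct Hin as [->|Hin]; [apply Rmax_l|eapply Rle_trans; [apply IH, Hin|apply Rmax_r]].
Qed.

Section Evolution.
Variable Theta : R -> R -> R -> R.
Variables (n : nat) (dt : R) (theta0 q0 : nat -> R) (l : nat).
Hypothesis n_pos : (1 <= n)%nat.
Hypothesis Theta_le_w : forall w1 w2 z t, w1 <= w2 -> Theta w1 z t <= Theta w2 z t.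
Hypothesis Theta_le_z : forall w z1 z2 t, z1 <= z2 -> Theta w z1 t <= Theta w z2 t.
Hypothesis theta0_sorted : forall j, (1 <= j < n)%nat -> theta0 j <= theta0 (S j).
Hypothesis init_dry : forall j, (1 <= j <= n)%nat ->
  Theta (theta0 j + q0 j) (zpos n j) 0 <= theta0 j.
Hypothesis margin : forall s, (S s <= l)%nat ->
  forall j i, (1 <= j <= n)%nat -> (1 <= i <= n)%nat ->
  Theta (theta0 j + q0 j) (zpos n i) (INR (S s) * dt) <
  Theta (theta0 j + q0 j) (zpos n (S i)) (INR s * dt).

Local Notation thM := (fun j => theta0 j + q0 j).
Local Notation cfg := (config_at Theta n dt theta0 q0).

Lemma config_at_invariant (s : nat) : (s <= l)%nat ->
  is_perm n (cfg s) /\ values_sorted n (cfg s) /\ dry_at Theta n thM (cfg s) (INR s * dt).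
Proof.
  induction s as [|s IH]; intros Hs.
  - split; [|split].
    + split; [|split]; simpl; auto; intros j Hj; exists j; auto.
    + exact theta0_sorted.
    + intros i Hi; simpl; rewrite Rmult_0_l; exact (init_dry i Hi).
  - destruct (IH ltac:(lia)) as [HP [HS Hdry]].
    destruct (time_step_invariant Theta n thM (INR (S s) * dt) (INR s * dt) n_pos
                Theta_le_w Theta_le_z (margin s Hs) (cfg s) 1 ltac:(lia) HP HS Hdry)
      as [HP' [HS' [Hdry' _]]].
    split; [exact HP'|split; [exact HS'|exact Hdry']].
Qed.

Lemma config_at_crossed (s j0 : nat) : (1 <= j0 <= n)%nat -> (S s <= l)%nat ->
  (crossed n (cfg s) j0 (cfg (S s)) <= 2)%nat.
Proof.
  intros Hj0 Hs; destruct (config_at_invariant s ltac:(lia)) as [HP [HS Hdry]].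
  exact (proj2 (proj2 (proj2 (time_step_invariant Theta n thM (INR (S s) * dt) (INR s * dt)
           n_pos Theta_le_w Theta_le_z (margin s Hs) (cfg s) j0 Hj0 HP HS Hdry)))).
Qed.

Lemma card_J_le (j0 k : nat) : (1 <= j0 <= n)%nat -> (k <= l)%nat ->
  (card_J Theta n dt theta0 q0 j0 k l <= 2 * (l - k))%nat.
Proof.
  intros Hj0 Hk.
  eapply Nat.le_trans;
    [|apply (filter_length_leave_telescope (fun s => below n j0 (cfg s)) (seq 1 n) k 2 (l - k));
      intros s Hs; apply config_at_crossed; auto; lia].
  replace (k + (l - k))%nat with l by lia.
  apply filter_length_mono; intros j _ E; apply andb_true_iff in E as [E1 E2].
  change (position n (cfg k) j <? position n (cfg k) j0 = true) in E1.
  change (position n (cfg l) j0 <? position n (cfg l) j = true) in E2.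
  unfold below; rewrite E1; simpl.
  apply negb_true_iff, Nat.ltb_ge; apply Nat.ltb_lt in E2; lia.
Qed.

End Evolution.

Theorem lemma4p7 :
  forall (Qsat Theta : R -> R -> R -> R),
    smooth3 Qsat ->
    (forall th z t, Derive (fun s => Qsat s z t) th > 0) ->
    (forall th z t, Derive (fun s => Qsat th s t) z < 0) ->
    (forall w z t, Theta w z t + Qsat (Theta w z t) z t = w) ->
    (forall w z t, Derive (fun s => Theta s z t) w > 0) ->
    (forall w z t, Derive (fun s => Theta w s t) z > 0) ->
  forall (T : R), T > 0 ->
  forall (Mp : R),
  exists C4 : R, C4 > 0 /\
    forall (n : nat) (dt : R) (theta0 q0 : nat -> R),
      (1 <= n)%nat -> dt > 0 ->
      (forall j, (1 <= j < n)%nat -> theta0 j <= theta0 (S j)) ->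
      (forall j, (1 <= j <= n)%nat -> q0 j <= Qsat (theta0 j) (INR j / INR n) 0) ->
      maxabs n theta0 + maxabs n q0 = Mp ->
      forall (j0 k l : nat),
        (1 <= j0 <= n)%nat ->
        (k < l)%nat ->
        INR l <= T / dt ->
        INR n * dt < 1 / C4 ->
        (card_J Theta n dt theta0 q0 j0 k l <= 2 * (l - k))%nat.
Proof.
  (* The monotonicity of [Theta] follows from that of [Qsat]. *)
  intros Qsat Theta HQ HQth HQz HTh _ _ T HT Mp.
  destruct (Theta_step_margin Qsat Theta HQ HQth HQz HTh Mp T HT) as [C4 [HC4 Hmargin]].
  exists C4; split; [exact HC4|].
  intros n dt theta0 q0 Hn Hdt Hsorted Hq HM j0 k l Hj0 Hkl HlT Hndt.
  assert (HlT' : INR l * dt <= T)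
    by (apply (Rmult_le_compat_r dt) in HlT; [field_simplify in HlT|]; lra).
  apply (card_J_le Theta n dt theta0 q0 l); auto; try lia.
  - exact (Theta_le_w Qsat Theta HQ HQth HQz HTh).
  - exact (Theta_le_z Qsat Theta HQ HQth HQz HTh).
  - intros j Hj; apply (Theta_le_of Qsat Theta HQ HQth HQz HTh).
    pose proof (Hq j Hj); unfold zpos; lra.
  - intros s Hs j i Hj Hi.
    pose proof (maxabs_ge n theta0 j Hj); pose proof (maxabs_ge n q0 j Hj).
    pose proof (Rabs_triang (theta0 j) (q0 j)).
    pose proof (pos_INR s); apply le_INR in Hs; rewrite S_INR in *.
    rewrite Rmult_plus_distr_r, Rmult_1_l; apply Hmargin; auto; nra.
Qed.
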